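(* For every $k\ge1$ and every smooth periodic function $y$, with $Y=\mathrm{diag}(y(x_0),\dots,y(x_{N-1}))$, the commutator $[D_k,Y]=D_kY-YD_k$ has height at most $k-1$, i.e. $\mathrm{ht}([D_k,Y])\le k-1$.
   Context: Uniform periodic grid $x_j=a+(b-a)\frac jN$, $j=0,\dots,N-1$. $D_F=N\cdot M$ where $M$ is the $N\times N$ circulant matrix with $-1$ on the diagonal, $1$ on the superdiagonal and $1$ in the bottom-left corner (so $(D_Fu)_j=N(u_{j+1}-u_j)$ with periodic indices); $D_B=-D_F^\dagger$; $D_2=D_BD_F=D_FD_B$ ($N^2$ times the periodic circulant with $-2$ on the diagonal and $1$ on both off-diagonals). Higher differences: $D_k=D_2^{k/2}$ for $k$ even and $D_k=D_FD_2^{(k-1)/2}$ for $k$ odd. An $N\times N$ matrix (family indexed by $N$) $P$ has height $m$ if $m$ is the highest order such that $\|P\|_2$ grows as $N^m$ as $N\to\infty$; thus $\mathrm{ht}(P)\le m$ means $\|P\|_2=O(N^m)$ as $N\to\infty$. *)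

From HB Require Import structures.
From mathcomp Require Import all_boot all_order all_algebra.
From mathcomp Require Import all_classical all_reals all_analysis.
Set Implicit Arguments. Unset Strict Implicit. Unset Printing Implicit Defensive.
Import Order.TTheory GRing.Theory Num.Theory.
Local Open Scope ring_scope.

Section Defs.
Variable R : realType.

Definition smooth (y : R -> R) : Prop :=
  forall (n : nat) (x : R), derivable (derive1n n y) x 1.

Definition periodic_with (p : R) (y : R -> R) : Prop :=
  forall x : R, y (x + p) = y x.

Definition grid (a b : R) (N j : nat) : R := a + (b - a) * j%:R / N%:R.

Definition Ymat (a b : R) (y : R -> R) (N : nat) : 'M[R]_N :=
  diag_mx (\row_(j < N) y (grid a b N j)).

(* D_F = N * M, M circulant: -1 on diagonal, 1 on superdiagonal and bottom-left *)
Definition DF (N : nat) : 'M[R]_N :=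
  \matrix_(i < N, j < N)
    (N%:R * ((j == (i.+1 %% N)%N :> nat)%:R - (j == i :> nat)%:R)).

(* D_B = - D_F^dagger (real matrices: adjoint = transpose) *)
Definition DB (N : nat) : 'M[R]_N := - (DF N)^T.

Definition D2 (N : nat) : 'M[R]_N := DB N *m DF N.

Definition mxpow (N : nat) (A : 'M[R]_N) (k : nat) : 'M[R]_N :=
  iter k (fun B => A *m B) 1%:M.

Definition Dk (N k : nat) : 'M[R]_N :=
  if odd k then DF N *m mxpow (D2 N) k./2 else mxpow (D2 N) k./2.

Definition commutator (N : nat) (A B : 'M[R]_N) : 'M[R]_N := A *m B - B *m A.

Definition vnorm2 (N : nat) (v : 'cV[R]_N) : R :=
  Num.sqrt (\sum_(i < N) (v i ord0) ^+ 2).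

(* ht(P) <= m : ||P_N||_2 = O(N^m) as N -> oo, with ||.||_2 the operator norm
   induced by the Euclidean vector norm (written out: ||P_N v|| <= C N^m ||v||). *)
Definition height_le (P : forall N : nat, 'M[R]_N) (m : nat) : Prop :=
  exists (C : R) (N0 : nat), forall (N : nat), (N0 <= N)%N ->
    forall v : 'cV[R]_N, vnorm2 (P N *m v) <= C * N%:R ^+ m * vnorm2 v.

End Defs.

(* With S the cyclic shift, D_F = N (S - I) and D_B = N (I - S^T), so both have norm
   O(N).  Moving S past the diagonal matrix Y leaves the diagonal of forward differences
   y(x_(j+1)) - y(x_j), which are O(1/N) because y' is bounded on [a, b] and y is
   (b - a)-periodic (this handles the wrap-around entry); hence [D_F, Y] and [D_B, Y]
   are O(1).  The Leibniz rule [A B, Y] = A [B, Y] + [A, Y] B then propagates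
   "||F|| = O(N^p) and ||[F, Y]|| = O(N^(p-1))" through the products defining D_k. *)

From HB Require Import structures.
From mathcomp Require Import all_boot all_order all_algebra.
From mathcomp Require Import all_classical all_reals all_analysis.
From mathcomp Require Import ring lra zify.
Set Implicit Arguments. Unset Strict Implicit. Set Maximal Implicit Insertion.
Import Order.TTheory GRing.Theory Num.Theory numFieldNormedType.Exports.
Local Open Scope classical_set_scope.
Local Open Scope ring_scope.

Lemma continuous_derive1_lipschitz (R : realType) (a b : R) (y : R -> R) :
  a <= b -> (forall x, derivable y x 1) -> {within `[a, b], continuous (derive1 y)} ->
  exists M : R, forall u w, a <= u -> u <= w -> w <= b -> `|y w - y u| <= M * (w - u).
Proof.
move=> ab dy cdy.
have [cM _ HM] := EVT_max ab cdy; have [cm _ Hm] := EVT_min ab cdy.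
exists (`|derive1 y cM| + `|derive1 y cm|) => u w au uw wb.
have [c cuw ->] : exists2 c, c \in `[u, w] & y w - y u = derive1 y c * (w - u).
  apply: MVT_segment => //; first by move=> x _; rewrite derive1E; exact: derivableP.
  exact: derivable_within_continuous.
have cab : c \in `[a, b].
  by move: cuw; rewrite !in_itv /= => /andP[uc cw]; rewrite (le_trans au uc) (le_trans cw wb).
have y'c : `|derive1 y c| <= `|derive1 y cM| + `|derive1 y cm|.
  have := HM c cab; have := Hm c cab; have := ler_norm (derive1 y cM).
  have := ler_norm (- derive1 y cm); have := normr_ge0 (derive1 y cM).
  have := normr_ge0 (derive1 y cm); rewrite normrN ler_norml => *.
  by apply/andP; split; lra.
rewrite normrM [`|w - u|]ger0_norm ?subr_ge0 //.
by apply: ler_wpM2r; rewrite ?subr_ge0.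
Qed.

Section SquaredNorm.
Variables (R : realFieldType) (N : nat).
Implicit Types (v : 'cV[R]_N) (A B : 'M[R]_N).

Definition sqnorm (v : 'cV[R]_N) : R := \sum_(i < N) v i ord0 ^+ 2.

Definition sqnorm_bounded (A : 'M[R]_N) (c : R) : Prop :=
  forall v, sqnorm (A *m v) <= c * sqnorm v.

Lemma sqnorm_ge0 v : 0 <= sqnorm v.
Proof. by apply: sumr_ge0 => i _; exact: sqr_ge0. Qed.

Lemma sqnormN v : sqnorm (- v) = sqnorm v.
Proof. by apply: eq_bigr => i _; rewrite mxE sqrrN. Qed.

Lemma sqnormZ s v : sqnorm (s *: v) = s ^+ 2 * sqnorm v.
Proof. by rewrite /sqnorm mulr_sumr; apply: eq_bigr => i _; rewrite mxE exprMn. Qed.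

Lemma sqnorm_bounded0 c : 0 <= c -> sqnorm_bounded 0 c.
Proof.
move=> c0 v; rewrite mul0mx /sqnorm big1 ?mulr_ge0 ?sqnorm_ge0 // => i _.
by rewrite mxE expr0n.
Qed.

Lemma sqnorm_bounded1 : sqnorm_bounded 1%:M 1.
Proof. by move=> v; rewrite mul1mx mul1r. Qed.

Lemma sqnorm_boundedM A B c d :
  0 <= c -> sqnorm_bounded A c -> sqnorm_bounded B d -> sqnorm_bounded (A *m B) (c * d).
Proof.
move=> c0 hA hB v; rewrite -mulmxA; apply: le_trans (hA _) _.
by rewrite -mulrA ler_wpM2l.
Qed.

(* From [(p + q)^2 <= 2 p^2 + 2 q^2], avoiding the triangle inequality for [sqrt]. *)
Lemma sqnorm_boundedD A B c d :
  sqnorm_bounded A c -> sqnorm_bounded B d -> sqnorm_bounded (A + B) (2 * c + 2 * d).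
Proof.
move=> hA hB v; rewrite mulmxDl.
apply: (@le_trans _ _ (2 * sqnorm (A *m v) + 2 * sqnorm (B *m v))).
  rewrite /sqnorm !mulr_sumr -big_split /=; apply: ler_sum => i _; rewrite mxE.
  have := sqr_ge0 ((A *m v) i ord0 - (B *m v) i ord0); nra.
have := hA v; have := hB v; lra.
Qed.

Lemma sqnorm_boundedN A c : sqnorm_bounded A c -> sqnorm_bounded (- A) c.
Proof. by move=> hA v; rewrite mulNmx sqnormN. Qed.

Lemma sqnorm_boundedZ A c s : sqnorm_bounded A c -> sqnorm_bounded (s *: A) (s ^+ 2 * c).
Proof. by move=> hA v; rewrite -scalemxAl sqnormZ -mulrA ler_wpM2l ?sqr_ge0. Qed.

Lemma sqnorm_bounded_diag (d : 'rV[R]_N) c :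
  (forall i, d 0 i ^+ 2 <= c) -> sqnorm_bounded (diag_mx d) c.
Proof.
move=> hd v; rewrite mul_diag_mx /sqnorm mulr_sumr; apply: ler_sum => i _.
by rewrite mxE exprMn ler_wpM2r ?sqr_ge0.
Qed.

Definition shift_mx : 'M[R]_N := \matrix_(i, j) (j == ordS i)%:R.

Lemma mul_shift_mx v i : (shift_mx *m v) i ord0 = v (ordS i) ord0.
Proof.
rewrite mxE (bigD1 (ordS i)) //= mxE eqxx mul1r big1 ?addr0 // => j /negbTE hj.
by rewrite mxE hj mul0r.
Qed.

Lemma mul_tr_shift_mx v i : (shift_mx^T *m v) i ord0 = v (ord_pred i) ord0.
Proof.
rewrite mxE (bigD1 (ord_pred i)) //= !mxE ord_predK eqxx mul1r big1 ?addr0 // => j hj.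
rewrite !mxE; case: eqP => [ji|]; last by rewrite mul0r.
by move: hj; rewrite ji ordSK eqxx.
Qed.

Lemma sqnorm_bounded_shift_mx : sqnorm_bounded shift_mx 1.
Proof.
move=> v; rewrite mul1r /sqnorm; under eq_bigr => i _ do rewrite mul_shift_mx.
by rewrite [X in _ <= X](reindex_inj (@ordS_inj N)).
Qed.

Lemma sqnorm_bounded_tr_shift_mx : sqnorm_bounded shift_mx^T 1.
Proof.
move=> v; rewrite mul1r /sqnorm; under eq_bigr => i _ do rewrite mul_tr_shift_mx.
by rewrite [X in _ <= X](reindex_inj (@ord_pred_inj N)).
Qed.

End SquaredNorm.

Arguments sqnorm {R N}.
Arguments shift_mx {R N}.

Section DifferenceMatrices.
Variables (R : realType) (N : nat).
Implicit Types (A B C : 'M[R]_N) (d : 'rV[R]_N).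

Definition forward_diff d : 'rV[R]_N := \row_i (d 0 (ordS i) - d 0 i).

Lemma commutator_mull A B C :
  commutator (A *m B) C = A *m commutator B C + commutator A C *m B.
Proof. by rewrite /commutator mulmxBr mulmxBl !mulmxA addrA subrK. Qed.

Lemma DF_shift_mx : DF R N = N%:R *: (shift_mx - 1%:M).
Proof. by apply/matrixP => i j; rewrite !mxE [i == j]eq_sym. Qed.

Lemma DB_shift_mx : DB R N = N%:R *: (1%:M - shift_mx^T).
Proof. by apply/matrixP => i j; rewrite /DB DF_shift_mx !mxE [i == j]eq_sym; ring. Qed.

Lemma commutator_shift_mx_diag d :
  commutator shift_mx (diag_mx d) = diag_mx (forward_diff d) *m shift_mx.
Proof.
apply/matrixP => i j; rewrite /commutator mul_mx_diag !mul_diag_mx !mxE.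
by case: eqP => [->|_]; [ring | rewrite !(mulr0, mul0r, subrr)].
Qed.

Lemma commutator_diag_tr_shift_mx d :
  commutator (diag_mx d) shift_mx^T = shift_mx^T *m diag_mx (forward_diff d).
Proof.
apply/matrixP => i j; rewrite /commutator !mul_mx_diag !mul_diag_mx !mxE.
by case: eqP => [->|_]; [ring | rewrite !(mulr0, mul0r, subrr)].
Qed.

Lemma commutator_DF_diag d :
  commutator (DF R N) (diag_mx d) = N%:R *: (diag_mx (forward_diff d) *m shift_mx).
Proof.
rewrite -commutator_shift_mx_diag /commutator DF_shift_mx.
rewrite -scalemxAl -scalemxAr -scalerBr.
by rewrite mulmxBl mulmxBr mul1mx mulmx1 opprB addrA subrK.
Qed.

Lemma commutator_DB_diag d :
  commutator (DB R N) (diag_mx d) = N%:R *: (shift_mx^T *m diag_mx (forward_diff d)).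
Proof.
rewrite -commutator_diag_tr_shift_mx /commutator DB_shift_mx.
rewrite -scalemxAl -scalemxAr -scalerBr.
by rewrite mulmxBl mulmxBr mul1mx mulmx1 opprB addrC addrA subrK.
Qed.

End DifferenceMatrices.

Section GridFunction.
Variables (R : realType) (a b : R) (y : R -> R).
Hypothesis hab : a < b.
Hypothesis hper : periodic_with (b - a) y.
Variable M : R.
Hypothesis hlip : forall u w, a <= u -> u <= w -> w <= b -> `|y w - y u| <= M * (w - u).

Lemma grid_ordS N (i : 'I_N) : y (grid a b N (ordS i)) = y (grid a b N i + (b - a) / N%:R).
Proof.
have N0 : N%:R != 0 :> R by rewrite pnatr_eq0 -lt0n (leq_ltn_trans _ (ltn_ord i)).
rewrite /grid /=; have [iN|Ni] := ltnP i.+1 N.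
  by rewrite modn_small // -natr1; congr y; ring.
have {Ni}iN : i.+1 = N by apply/eqP; rewrite eqn_leq ltn_ord Ni.
rewrite iN modnn mulr0 mul0r addr0.
have -> : a + (b - a) * i%:R / N%:R + (b - a) / N%:R = a + (b - a) * i.+1%:R / N%:R.
  by rewrite -natr1; ring.
by rewrite iN mulfK // hper.
Qed.

Lemma sqr_forward_diff_grid_le N (i : 'I_N) :
  forward_diff (\row_j y (grid a b N j)) 0 i ^+ 2 <= (M * (b - a) / N%:R) ^+ 2.
Proof.
have N0 : 0 < N%:R :> R by rewrite ltr0n (leq_ltn_trans _ (ltn_ord i)).
rewrite !mxE grid_ordS.
set x := grid a b N i; set h := (b - a) / N%:R.
have ba : 0 <= b - a by rewrite subr_ge0 ltW.
have h0 : 0 <= h by rewrite divr_ge0.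
have ax : a <= x by rewrite /x /grid lerDl !mulr_ge0 ?invr_ge0.
have xhb : x + h <= b.
  have -> : x + h = a + (b - a) * (i.+1%:R / N%:R) by rewrite /x /h /grid -natr1; ring.
  have : i.+1%:R / N%:R <= 1 :> R by rewrite ler_pdivrMr // mul1r ler_nat.
  nra.
have xxh : x <= x + h by rewrite lerDl.
have := hlip ax xxh xhb; rewrite [x + h - x]addrC addKr => he.
rewrite -mulrA -/h -real_normK ?num_real //.
by rewrite lerXn2r ?nnegrE ?(le_trans _ he).
Qed.

(* [order_le F p]: [||F N|| = O(N^p)] and [||[F N, Y N]|| = O(N^(p-1))], stated
   for squared norms; the division by [N^2] keeps [p = 0] meaningful. *)
Definition order_le (F : forall N, 'M[R]_N) (p : nat) : Prop :=
  exists c c' : R, 0 <= c /\ 0 <= c' /\ forall N, (0 < N)%N ->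
    sqnorm_bounded (F N) (c * N%:R ^+ (2 * p)) /\
    sqnorm_bounded (commutator (F N) (Ymat a b y N)) (c' * N%:R ^+ (2 * p) / N%:R ^+ 2).

Lemma order_le1 : order_le (fun N => 1%:M) 0.
Proof.
exists 1, 0; do 2!split => //; move=> N _; split.
  by rewrite muln0 expr0 mulr1; exact: sqnorm_bounded1.
by rewrite /commutator mul1mx mulmx1 subrr !mul0r; exact: sqnorm_bounded0.
Qed.

Lemma order_leM F G p q :
  order_le F p -> order_le G q -> order_le (fun N => F N *m G N) (p + q).
Proof.
move=> [c [c' [c0 [c'0 hF]]]] [d [d' [d0 [d'0 hG]]]].
exists (c * d), (2 * c * d' + 2 * c' * d); split; first exact: mulr_ge0.
split; first by rewrite addr_ge0 // !mulr_ge0.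
move=> N N0; have [hA hcA] := hF N N0; have [hB hcB] := hG N N0.
have cN0 : 0 <= c * N%:R ^+ (2 * p) by rewrite mulr_ge0 ?exprn_ge0.
have c'N0 : 0 <= c' * N%:R ^+ (2 * p) / N%:R ^+ 2.
  by rewrite !mulr_ge0 ?invr_ge0 ?exprn_ge0.
split.
  rewrite (_ : _ * _ = c * N%:R ^+ (2 * p) * (d * N%:R ^+ (2 * q))).
    exact: sqnorm_boundedM.
  by rewrite mulnDr exprD; ring.
rewrite commutator_mull (_ : _ / _ = 2 * (c * N%:R ^+ (2 * p) * (d' * N%:R ^+ (2 * q) / N%:R ^+ 2))
    + 2 * (c' * N%:R ^+ (2 * p) / N%:R ^+ 2 * (d * N%:R ^+ (2 * q)))).
  exact: sqnorm_boundedD (sqnorm_boundedM cN0 hA hcB) (sqnorm_boundedM c'N0 hcA hB).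
by rewrite mulnDr exprD; ring.
Qed.

Lemma order_le_DF : order_le (fun N => DF R N) 1.
Proof.
exists 4, ((M * (b - a)) ^+ 2); do 2!split => //; first exact: sqr_ge0.
move=> N N0; have n0 : N%:R != 0 :> R by rewrite pnatr_eq0 -lt0n.
split.
  rewrite DF_shift_mx (_ : _ * _ = N%:R ^+ 2 * (2 * 1 + 2 * 1)); last first.
    by rewrite muln1; ring.
  exact: sqnorm_boundedZ (sqnorm_boundedD sqnorm_bounded_shift_mx
    (sqnorm_boundedN sqnorm_bounded1)).
rewrite /Ymat commutator_DF_diag (_ : _ / _ = N%:R ^+ 2 * ((M * (b - a) / N%:R) ^+ 2 * 1)).
  exact: sqnorm_boundedZ (sqnorm_boundedM (sqr_ge0 _)
    (sqnorm_bounded_diag sqr_forward_diff_grid_le) sqnorm_bounded_shift_mx).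
by rewrite muln1; field.
Qed.

Lemma order_le_DB : order_le (fun N => DB R N) 1.
Proof.
exists 4, ((M * (b - a)) ^+ 2); do 2!split => //; first exact: sqr_ge0.
move=> N N0; have n0 : N%:R != 0 :> R by rewrite pnatr_eq0 -lt0n.
split.
  rewrite DB_shift_mx (_ : _ * _ = N%:R ^+ 2 * (2 * 1 + 2 * 1)); last first.
    by rewrite muln1; ring.
  exact: sqnorm_boundedZ (sqnorm_boundedD sqnorm_bounded1
    (sqnorm_boundedN sqnorm_bounded_tr_shift_mx)).
rewrite /Ymat commutator_DB_diag (_ : _ / _ = N%:R ^+ 2 * (1 * (M * (b - a) / N%:R) ^+ 2)).
  exact: sqnorm_boundedZ (sqnorm_boundedM ler01 sqnorm_bounded_tr_shift_mx
    (sqnorm_bounded_diag sqr_forward_diff_grid_le)).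
by rewrite muln1; field.
Qed.

Lemma order_le_mxpow_D2 m : order_le (fun N => mxpow (D2 R N) m) (2 * m).
Proof.
elim: m => [|m IHm]; first exact: order_le1.
by rewrite mulnS; apply: order_leM IHm; apply: (order_leM order_le_DB order_le_DF).
Qed.

Lemma order_le_Dk k : order_le (fun N => Dk R N k) k.
Proof.
rewrite /Dk; have := odd_double_half k; rewrite -muln2.
case: (odd k) => /= hk.
  rewrite {2}(_ : k = 1 + 2 * k./2); last by lia.
  exact: order_leM order_le_DF (order_le_mxpow_D2 _).
by rewrite {2}(_ : k = 2 * k./2); [exact: order_le_mxpow_D2 | lia].
Qed.

End GridFunction.

Lemma vnorm2_mul_le (R : realType) N (A : 'M[R]_N) c :
  0 <= c -> sqnorm_bounded A (c ^+ 2) -> forall v, vnorm2 (A *m v) <= c * vnorm2 v.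
Proof.
move=> c0 hA v; apply: le_trans (ler_wsqrtr (hA v)) _.
by rewrite sqrtrM ?sqr_ge0 // sqrtr_sqr ger0_norm.
Qed.

Theorem lemma4p5 (R : realType) (a b : R) (hab : a < b) (y : R -> R)
  (hy : smooth y) (hper : periodic_with (b - a) y) (k : nat) (hk : (1 <= k)%N) :
  height_le (fun N : nat => commutator (Dk R N k) (Ymat a b y N)) (k - 1).
Proof.
have [M hlip] : exists M, forall u w, a <= u -> u <= w -> w <= b -> `|y w - y u| <= M * (w - u).
  apply: continuous_derive1_lipschitz (ltW hab) (hy 0%N) _.
  exact: derivable_within_continuous (fun x _ => hy 1%N x).
have [? [c [_ [c0 hDk]]]] := order_le_Dk hab hper hlip k.
exists (Num.sqrt c), 1%N => N N0 v.
have [_ hcomm] := hDk N N0.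
apply: vnorm2_mul_le; first by rewrite mulr_ge0 ?sqrtr_ge0 ?exprn_ge0.
rewrite exprMn sqr_sqrtr // -exprM (_ : ((k - 1) * 2 = 2 * k - 2)%N); last by lia.
rewrite exprB ?mulrA //; first by lia.
by rewrite unitfE pnatr_eq0 -lt0n.
Qed.
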